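(* Let $U_q(H_1,H_2,X^\pm)$ be the Hopf algebra described in the context, and put $E=K_2X^+$, $F=K_2^{-1}X^-$. Then $U_q(H_1,H_2,X^\pm)$ is quasitriangular with universal $R$-matrix $$\mathcal{R}=e^{-i\frac{\pi}{4}H_2\otimes H_2}\,q^{\frac14\left(H_1\otimes H_1-H_2\otimes H_2\right)}\left(1\otimes 1+(1-q^2)\,E\otimes F\right),$$ i.e. $\mathcal R$ is invertible, $\tau\circ\Delta(a)=\mathcal R\,\Delta(a)\,\mathcal R^{-1}$ for all $a$ (with $\tau$ the flip), $(\Delta\otimes\mathrm{id})\mathcal R=\mathcal R_{13}\mathcal R_{23}$ and $(\mathrm{id}\otimes\Delta)\mathcal R=\mathcal R_{13}\mathcal R_{12}$.
   Context: $q$ is a deformation parameter and exponentials of the generators are understood formally (e.g. as formal power series). Set $K_1=q^{H_1/2}$ and $K_2=e^{i\frac{\pi}{2}H_2}q^{H_2/2}$. $U_q(H_1,H_2,X^\pm)$ is the Hopf algebra generated by $H_1,H_2,X^+,X^-$ with relations $[H_1,H_2]=0$, $[H_1,X^\pm]=\pm2X^\pm$, $[H_2,X^\pm]=\mp 2X^\pm$, $[X^+,X^-]=\frac{K_1K_2-K_1^{-1}K_2^{-1}}{q-q^{-1}}$, $(X^\pm)^2=0$; coproduct $\Delta H_i=H_i\otimes1+1\otimes H_i$, $\Delta X^+=X^+\otimes K_1+K_2^{-1}\otimes X^+$, $\Delta X^-=X^-\otimes K_2+K_1^{-1}\otimes X^-$ (so $\Delta K_i=K_i\otimes K_i$); counit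 $\varepsilon(H_i)=\varepsilon(X^\pm)=0$; antipode $S(H_i)=-H_i$, $S(X^+)=-qK_1^{-1}K_2X^+$, $S(X^-)=qK_1K_2^{-1}X^-$. For $\mathcal R=\sum_i a_i\otimes b_i$, $\mathcal R_{12}=\sum a_i\otimes b_i\otimes1$, $\mathcal R_{13}=\sum a_i\otimes 1\otimes b_i$, $\mathcal R_{23}=\sum 1\otimes a_i\otimes b_i$. *)

From mathcomp Require Import all_boot all_algebra.
From mathcomp Require Import complex.
From mathcomp Require Import reals sequences exp trigo.
Set Implicit Arguments. Unset Strict Implicit. Unset Printing Implicit Defensive.
Import GRing.Theory Num.Theory.
Local Open Scope ring_scope.
Local Open Scope complex_scope.

Definition cexp {R : realType} (z : R[i]) : R[i] :=
  let: a +i* b := z in (expR a * cos b) +i* (expR a * sin b).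

Section Model.
Variable R : realType.
Local Notation C := R[i].

(* The deformation parameter: q = e^h, so that q^x := e^(h x) makes sense   *)
(* for formal (here: complex-valued) exponents x.                          *)
Variable h : C.
Definition qpow (x : C) : C := cexp (h * x).
Definition q : C := qpow 1.
Definition ipi : C := 'i * (pi%:C).

(* Cartan functions of a weight x = (x1, x2) (values of H1, H2). *)
Definition K1f (x : C * C) : C := qpow (x.1 / 2%:R).
Definition K2f (x : C * C) : C := cexp (ipi / 2%:R * x.2) * qpow (x.2 / 2%:R).
Definition Cf (x : C * C) : C :=
  (K1f x * K2f x - (K1f x * K2f x)^-1) / (q - q^-1).

(* Completed n-fold tensor power of U_q(H1,H2,X^+-).                         *)
(* By the relations, U has the PBW basis  phi(H1,H2) (X^+)^e (X^-)^f with     *)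
(* e,f in {0,1}.  Allowing "formal" functions phi of the Cartan generators   *)
(* (exponentials etc.), an element of the completed n-fold tensor power is   *)
(*   sum_M  a_M(H^(1),...,H^(n)) * M ,                                       *)
(* where M ranges over the tensor products of the 4 monomials               *)
(* (X^+)^e (X^-)^f in each leg, the coefficient a_M is a function of the     *)
(* 2n Cartan generators H^(k) = (H1^(k),H2^(k)) (written to the left), and   *)
(* leg k of M is (M k) = (e_k, f_k).                                        *)
Definition mon n := {ffun 'I_n -> bool * bool}.
Definition Elt n := mon n -> ('I_n -> C * C) -> C.

(* commutation  (X^+)^e (X^-)^f phi(H1,H2) = phi(H1-2e+2f, H2+2e-2f) (X^+)^e (X^-)^f *)
Definition shift (m : bool * bool) (x : C * C) : C * C :=
  (x.1 - (m.1%:R *+ 2) + (m.2%:R *+ 2), x.2 + (m.1%:R *+ 2) - (m.2%:R *+ 2)).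

(* single-leg structure constants:                                          *)
(* (X^+)^e (X^-)^f (X^+)^e' (X^-)^f' = sum_m'' c m m' m''(H) m''            *)
(* using X^- X^+ = X^+ X^- - Cf(H), (X^+)^2 = (X^-)^2 = 0.                  *)
Definition coef (m m' m'' : bool * bool) (x : C * C) : C :=
  let: (e, f) := m in let: (e', f') := m' in
  if f && e' then
    ((~~ e && ~~ f' && (m'' == (true, true)))%:R)
    - ((m'' == (e, f'))%:R) * Cf (shift (e, false) x)
  else if (e && e') || (f && f') then 0
  else ((m'' == (e || e', f || f'))%:R).

Definition mshift n (M : mon n) (x : 'I_n -> C * C) : 'I_n -> C * C :=
  fun k => shift (M k) (x k).

Definition eadd n (a b : Elt n) : Elt n := fun M x => a M x + b M x.
Definition escale n (c : C) (a : Elt n) : Elt n := fun M x => c * a M x.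
Definition emul n (a b : Elt n) : Elt n := fun M'' x =>
  \sum_(M : mon n) \sum_(M' : mon n)
     a M x * b M' (mshift M x) * \prod_(k < n) coef (M k) (M' k) (M'' k) (x k).

Definition mon0 n : mon n := [ffun _ => (false, false)].
Definition efun n (phi : ('I_n -> C * C) -> C) : Elt n :=
  fun M x => if M == mon0 n then phi x else 0.
Definition eone n : Elt n := efun (fun _ => 1).
Definition monk n (k : 'I_n) (m : bool * bool) : mon n :=
  [ffun j => if j == k then m else (false, false)].
Definition Xp n (k : 'I_n) : Elt n := fun M _ => (M == monk k (true, false))%:R.
Definition Xm n (k : 'I_n) : Elt n := fun M _ => (M == monk k (false, true))%:R.
Definition K1 n (k : 'I_n) : Elt n := efun (fun x => K1f (x k)).
Definition K2 n (k : 'I_n) : Elt n := efun (fun x => K2f (x k)).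
Definition K1i n (k : 'I_n) : Elt n := efun (fun x => (K1f (x k))^-1).
Definition K2i n (k : 'I_n) : Elt n := efun (fun x => (K2f (x k))^-1).

(* Leg embedding A_n -> A_m along an injection j : 'I_n -> 'I_m,            *)
(* e.g. a (x) b |-> a (x) 1 (x) b  for  R |-> R_13.                         *)
Definition emb n m (j : 'I_n -> 'I_m) (a : Elt n) : Elt m := fun M x =>
  if [forall l : 'I_m, (l \notin codom j) ==> (M l == (false, false))]
  then a [ffun k => M (j k)] (fun k => x (j k)) else 0.

Definition i0 : 'I_2 := ord0.
Definition i1 : 'I_2 := ord_max.
Definition flip2 (k : 'I_2) : 'I_2 := if k == i0 then i1 else i0.
Definition tau (a : Elt 2) : Elt 2 := fun M x => a [ffun k => M (flip2 k)] (fun k => x (flip2 k)).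

(* General algebra map A_n -> A_m determined by the image of the Cartan    *)
(* generators (a substitution L on weights) and the images xp k, xm k of     *)
(* X^+ and X^- in leg k:                                                     *)
(*   sum_M a_M(H) M  |->  sum_M a_M(L(H')) prod_k xp_k^(e_k) xm_k^(f_k).    *)
Definition monimg n m (xp xm : 'I_n -> Elt m) (M : mon n) : Elt m :=
  foldr (fun k acc => emul (emul (if (M k).1 then xp k else @eone m)
                                  (if (M k).2 then xm k else @eone m)) acc)
        (@eone m) (enum 'I_n).
Definition subst n m (L : ('I_m -> C * C) -> ('I_n -> C * C))
  (xp xm : 'I_n -> Elt m) (a : Elt n) : Elt m := fun M'' y =>
  \sum_(M : mon n) emul (efun (fun y => a M (L y))) (monimg xp xm M) M'' y.

Definition addw (u v : C * C) : C * C := (u.1 + v.1, u.2 + v.2).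

(* coproduct  Delta : A_1 -> A_2 :  Delta H_i = H_i (x) 1 + 1 (x) H_i,      *)
(* Delta X^+ = X^+ (x) K1 + K2^-1 (x) X^+,  Delta X^- = X^- (x) K2 + K1^-1 (x) X^- *)
Definition DXp : Elt 2 := eadd (emul (Xp i0) (K1 i1)) (emul (K2i i0) (Xp i1)).
Definition DXm : Elt 2 := eadd (emul (Xm i0) (K2 i1)) (emul (K1i i0) (Xm i1)).
Definition Delta (a : Elt 1) : Elt 2 :=
  subst (fun y _ => addw (y i0) (y i1)) (fun _ => DXp) (fun _ => DXm) a.

Definition j0 : 'I_3 := ord0.
Definition j1 : 'I_3 := inord 1.
Definition j2 : 'I_3 := ord_max.
Definition leg01 (k : 'I_2) : 'I_3 := if k == i0 then j0 else j1.
Definition leg12 (k : 'I_2) : 'I_3 := if k == i0 then j1 else j2.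
Definition leg02 (k : 'I_2) : 'I_3 := if k == i0 then j0 else j2.
Definition leg2 (k : 'I_1) : 'I_3 := j2.
Definition leg0 (k : 'I_1) : 'I_3 := j0.

Definition DeltaId (a : Elt 2) : Elt 3 :=
  subst (fun y k => if k == i0 then addw (y j0) (y j1) else y j2)
        (fun k => if k == i0 then emb leg01 DXp else Xp j2)
        (fun k => if k == i0 then emb leg01 DXm else Xm j2) a.
Definition IdDelta (a : Elt 2) : Elt 3 :=
  subst (fun y k => if k == i0 then y j0 else addw (y j1) (y j2))
        (fun k => if k == i0 then Xp j0 else emb leg12 DXp)
        (fun k => if k == i0 then Xm j0 else emb leg12 DXm) a.

Definition R12 (a : Elt 2) : Elt 3 := emb leg01 a.
Definition R13 (a : Elt 2) : Elt 3 := emb leg02 a.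
Definition R23 (a : Elt 2) : Elt 3 := emb leg12 a.

Inductive inU : Elt 1 -> Prop :=
| inU_const c : inU (efun (fun _ => c))
| inU_H1 : inU (efun (fun x => (x ord0).1))
| inU_H2 : inU (efun (fun x => (x ord0).2))
| inU_Xp : inU (Xp ord0)
| inU_Xm : inU (Xm ord0)
| inU_K1 : inU (K1 ord0)
| inU_K2 : inU (K2 ord0)
| inU_K1i : inU (K1i ord0)
| inU_K2i : inU (K2i ord0)
| inU_add a b : inU a -> inU b -> inU (eadd a b)
| inU_mul a b : inU a -> inU b -> inU (emul a b).

Definition Rmat : Elt 2 :=
  emul (efun (fun y => cexp (- (ipi / 4%:R) * ((y i0).2 * (y i1).2)) *
                      qpow (((y i0).1 * (y i1).1 - (y i0).2 * (y i1).2) / 4%:R)))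
       (eadd (@eone 2)
             (escale (1 - q ^+ 2)
                (emul (emul (K2 i0) (Xp i0)) (emul (K2i i1) (Xm i1))))).

End Model.

(* Every element of the completed tensor power is a finite sum of terms phi(H) M, where M is a
   tensor product of the PBW monomials (X^+)^e (X^-)^f and phi is a function of the weights.
   The R-matrix has just two such terms: its Cartan part A = e^{-i pi/4 H2 (x) H2}
   q^{(H1 (x) H1 - H2 (x) H2)/4}, and A (1 - q^2) K2 (x) K2^-1 on X^+ (x) X^-.  A is a
   bicharacter of the two weights, and commuting X^+ or X^- in one leg past A multiplies it by
   (K1 K2)^-1 or K1 K2 of the other leg; this twist is what turns Delta into tau o Delta.  As
   (X^+ (x) X^-)^2 = 0, R^-1 is again a two-term element.  Each identity then reduces, monomial
   by monomial, to an identity between exponentials of the weights.  Quasi-cocommutativity is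
   linear in a, so it suffices to check it on single terms phi(H) M of A_1; hence it holds on the
   whole completion, not only on U_q. *)

From Pilot Require Import Defs.
From mathcomp Require Import all_boot all_algebra.
From mathcomp Require Import complex.
From mathcomp Require Import reals sequences exp trigo boolp.
From mathcomp Require Import ring.
Import GRing.Theory Num.Theory.
Set Implicit Arguments. Unset Strict Implicit. Unset Printing Implicit Defensive.
Local Open Scope ring_scope.
Local Open Scope complex_scope.

Local Arguments shift : simpl never.
Local Arguments Cf : simpl never.
Local Arguments K1f : simpl never.
Local Arguments K2f : simpl never.
Local Arguments Defs.q : simpl never.

Notation m1 := (false, false).
Notation mXp := (true, false).
Notation mXm := (false, true).
Notation mXpXm := (true, true).

Section ComplexExponential.
Variable R : realType.

Lemma cexpD (z w : R[i]) : cexp (z + w) = cexp z * cexp w.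
Proof.
case: z => a b; case: w => c d /=.
by rewrite expRD cosD sinD; congr (_ +i* _); ring.
Qed.

Lemma cexp0 : cexp (0 : R[i]) = 1.
Proof. by rewrite /= expR0 cos0 sin0 !mul1r. Qed.

Lemma cexp_mulN (z : R[i]) : cexp z * cexp (- z) = 1.
Proof. by rewrite -cexpD subrr cexp0. Qed.

Lemma cexp_neq0 (z : R[i]) : cexp z != 0.
Proof.
by apply/eqP => z0; move: (cexp_mulN z); rewrite z0 mul0r => /eqP; rewrite eq_sym oner_eq0.
Qed.

Lemma cexpN (z : R[i]) : cexp (- z) = (cexp z)^-1.
Proof. by apply: (mulfI (cexp_neq0 z)); rewrite cexp_mulN mulfV ?cexp_neq0. Qed.

Lemma cexp_ipi : cexp (ipi R) = -1.
Proof.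
rewrite /ipi /= !mul0r mul1r subr0 !add0r expR0 !mul1r cospi sinpi.
by apply/eqP; rewrite eq_complex /= oppr0 !eqxx.
Qed.

End ComplexExponential.

Section Weights.
Variables (R : realType) (h : R[i]).
Local Notation C := R[i].
Local Notation q := (q h).

Definition Rcartan (u v : C * C) : C :=
  cexp (- (ipi R / 4%:R) * (u.2 * v.2)) * qpow h ((u.1 * v.1 - u.2 * v.2) / 4%:R).

Lemma shift_m1 (u : C * C) : shift m1 u = u.
Proof. by case: u => a b; rewrite /shift /=; congr (_, _); ring. Qed.

Lemma shift_mXpXm (u : C * C) : shift mXpXm u = u.
Proof. by case: u => a b; rewrite /shift /=; congr (_, _); ring. Qed.

Lemma addw_shift (u v : C * C) : addw (shift mXp u) (shift mXm v) = addw u v.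
Proof. by rewrite /addw /shift /=; congr (_, _); ring. Qed.

Lemma addwC (u v : C * C) : addw u v = addw v u.
Proof. by rewrite /addw; congr (_, _); ring. Qed.

Lemma q_neq0 : q != 0.
Proof. exact: cexp_neq0. Qed.

Lemma K1f_neq0 u : K1f h u != 0.
Proof. exact: cexp_neq0. Qed.

Lemma K2f_neq0 u : K2f h u != 0.
Proof. by rewrite /K2f mulf_neq0 ?cexp_neq0. Qed.

Lemma Rcartan_neq0 u v : Rcartan u v != 0.
Proof. by rewrite /Rcartan mulf_neq0 ?cexp_neq0. Qed.

Ltac exponents :=
  rewrite /Rcartan /K1f /K2f /qpow /Defs.q ?invfM -?cexpN -?cexpD; congr cexp;
  rewrite /shift /addw /=; field; by rewrite ?pnatr_eq0.

Lemma K1f_shiftXp u : K1f h (shift mXp u) = K1f h u * q^-1.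
Proof. exponents. Qed.

Lemma K1f_shiftXm u : K1f h (shift mXm u) = K1f h u * q.
Proof. exponents. Qed.

Lemma K2f_shiftXp u : K2f h (shift mXp u) = - (K2f h u * q).
Proof.
have -> : K2f h (shift mXp u) = cexp (ipi R) * (K2f h u * q) by exponents.
by rewrite cexp_ipi mulN1r.
Qed.

Lemma K2f_shiftXm u : K2f h (shift mXm u) = - (K2f h u * q^-1).
Proof.
have -> : K2f h (shift mXm u) = cexp (- ipi R) * (K2f h u * q^-1) by exponents.
by rewrite cexpN cexp_ipi invrN1 mulN1r.
Qed.

Lemma Rcartan_shiftXp_l u v : Rcartan (shift mXp u) v = Rcartan u v * (K1f h v * K2f h v)^-1.
Proof. exponents. Qed.

Lemma Rcartan_shiftXm_l u v : Rcartan (shift mXm u) v = Rcartan u v * (K1f h v * K2f h v).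
Proof. exponents. Qed.

Lemma Rcartan_shiftXp_r u v : Rcartan u (shift mXp v) = Rcartan u v * (K1f h u * K2f h u)^-1.
Proof. exponents. Qed.

Lemma Rcartan_shiftXm_r u v : Rcartan u (shift mXm v) = Rcartan u v * (K1f h u * K2f h u).
Proof. exponents. Qed.

Lemma Rcartan_addwl u w v : Rcartan (addw u w) v = Rcartan u v * Rcartan w v.
Proof. exponents. Qed.

Lemma Rcartan_addwr u v w : Rcartan u (addw v w) = Rcartan u v * Rcartan u w.
Proof. exponents. Qed.

Lemma K2f_addw u w : K2f h (addw u w) = K2f h u * K2f h w.
Proof. exponents. Qed.

End Weights.

Section Terms.
Variables (R : realType) (h : R[i]).
Local Notation C := R[i].

Definition eterm n (phi : ('I_n -> C * C) -> C) (P : mon n) : Elt R n :=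
  fun M x => if M == P then phi x else 0.

Lemma efun_eterm n (phi : ('I_n -> C * C) -> C) : efun phi = eterm phi (mon0 n).
Proof. by []. Qed.

Lemma eone_eterm n : @eone R n = eterm (fun _ => 1) (mon0 n).
Proof. by []. Qed.

Lemma Xp_eterm n (k : 'I_n) : Xp k = eterm (fun _ => 1) (monk k mXp).
Proof. by apply: funext => M; apply: funext => x; rewrite /Xp /eterm; case: eqP. Qed.

Lemma Xm_eterm n (k : 'I_n) : Xm k = eterm (fun _ => 1) (monk k mXm).
Proof. by apply: funext => M; apply: funext => x; rewrite /Xm /eterm; case: eqP. Qed.

Lemma eq_eterm n (phi psi : ('I_n -> C * C) -> C) P :
  phi =1 psi -> eterm phi P = eterm psi P.
Proof. by move=> /funext ->. Qed.

Lemma prod_eq_nat n (M N : mon n) : \prod_(k < n) ((M k == N k)%:R : C) = (M == N)%:R.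
Proof.
case: eqP => [->|neMN]; first by rewrite big1 // => k _; rewrite eqxx.
have : ~~ [forall k, M k == N k].
  by apply/negP => /forallP eqMN; apply: neMN; apply/ffunP => k; apply/eqP.
rewrite negb_forall => /existsP [k neMNk].
by rewrite (bigD1 k) //= (negbTE neMNk) mul0r.
Qed.

Lemma coef_m1l m m'' x : coef h m1 m m'' x = (m'' == m)%:R.
Proof. by case: m => [[] []]. Qed.

Lemma coef_m1r m m'' x : coef h m m1 m'' x = (m'' == m)%:R.
Proof. by case: m => [[] []]. Qed.

Lemma prod_coef_mon0l n (M N : mon n) x :
  \prod_(k < n) coef h (mon0 n k) (M k) (N k) (x k) = (N == M)%:R.
Proof. by rewrite -prod_eq_nat; apply: eq_bigr => k _; rewrite ffunE coef_m1l. Qed.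

Lemma prod_coef_mon0r n (M N : mon n) x :
  \prod_(k < n) coef h (M k) (mon0 n k) (N k) (x k) = (N == M)%:R.
Proof. by rewrite -prod_eq_nat; apply: eq_bigr => k _; rewrite ffunE coef_m1r. Qed.

Lemma mshift_mon0 n (x : 'I_n -> C * C) : mshift (mon0 n) x = x.
Proof. by apply: funext => k; rewrite /mshift ffunE shift_m1. Qed.

Lemma emul_eterml n phi (P : mon n) (b : Elt R n) :
  emul h (eterm phi P) b = fun M'' x => \sum_M' phi x * b M' (mshift P x) *
     \prod_(k < n) coef h (P k) (M' k) (M'' k) (x k).
Proof.
apply: funext => M''; apply: funext => x; rewrite /emul (bigD1 P) //= [X in _ + X = _]big1 ?addr0.
  by rewrite /eterm eqxx.
by move=> M /negbTE neMP; apply: big1 => M' _; rewrite /eterm neMP !mul0r.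
Qed.

Lemma emul_etermr n (a : Elt R n) psi (Q : mon n) :
  emul h a (eterm psi Q) = fun M'' x => \sum_M a M x * psi (mshift M x) *
     \prod_(k < n) coef h (M k) (Q k) (M'' k) (x k).
Proof.
apply: funext => M''; apply: funext => x; apply: eq_bigr => M _.
rewrite (bigD1 Q) //= [X in _ + X = _]big1 ?addr0; first by rewrite /eterm eqxx.
by move=> M' /negbTE neM'Q; rewrite /eterm neM'Q mulr0 mul0r.
Qed.

Lemma emul_eterm n phi psi (P Q : mon n) :
  emul h (eterm phi P) (eterm psi Q) = fun M x => phi x * psi (mshift P x) *
     \prod_(k < n) coef h (P k) (Q k) (M k) (x k).
Proof.
rewrite emul_eterml; apply: funext => M; apply: funext => x.
rewrite (bigD1 Q) //= [X in _ + X = _]big1 ?addr0; first by rewrite /eterm eqxx.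
by move=> M' /negbTE neM'Q; rewrite /eterm neM'Q mulr0 mul0r.
Qed.

Lemma emul_efunl n phi (b : Elt R n) : emul h (efun phi) b = fun M x => phi x * b M x.
Proof.
rewrite efun_eterm emul_eterml; apply: funext => M; apply: funext => x.
under eq_bigr do rewrite mshift_mon0 prod_coef_mon0l.
rewrite (bigD1 M) //= eqxx mulr1 big1 ?addr0 // => M' /negbTE neM'M.
by rewrite eq_sym neM'M mulr0.
Qed.

Lemma emul_efunr n (a : Elt R n) psi :
  emul h a (efun psi) = fun M x => a M x * psi (mshift M x).
Proof.
rewrite efun_eterm emul_etermr; apply: funext => M; apply: funext => x.
under eq_bigr do rewrite prod_coef_mon0r.
rewrite (bigD1 M) //= eqxx mulr1 big1 ?addr0 // => M' /negbTE neM'M.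
by rewrite eq_sym neM'M mulr0.
Qed.

Lemma emul_efun_eterm n phi psi (P : mon n) :
  emul h (efun phi) (eterm psi P) = eterm (fun x => phi x * psi x) P.
Proof.
rewrite emul_efunl; apply: funext => M; apply: funext => x; rewrite /eterm.
by case: eqP; rewrite ?mulr0.
Qed.

Lemma emul_eterm_efun n phi psi (P : mon n) :
  emul h (eterm phi P) (efun psi) = eterm (fun x => phi x * psi (mshift P x)) P.
Proof.
rewrite emul_efunr; apply: funext => M; apply: funext => x; rewrite /eterm.
by case: eqP => [->|]; rewrite ?mul0r.
Qed.

Lemma emulDl n (a b c : Elt R n) : emul h (eadd a b) c = eadd (emul h a c) (emul h b c).
Proof.
apply: funext => M; apply: funext => x; rewrite /emul /eadd -big_split.
by apply: eq_bigr => M1 _; rewrite -big_split; apply: eq_bigr => M2 _; rewrite !mulrDl.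
Qed.

Lemma emulDr n (a b c : Elt R n) : emul h a (eadd b c) = eadd (emul h a b) (emul h a c).
Proof.
apply: funext => M; apply: funext => x; rewrite /emul /eadd -big_split.
by apply: eq_bigr => M1 _; rewrite -big_split; apply: eq_bigr => M2 _; rewrite mulrDr mulrDl.
Qed.

Lemma emul1l n (a : Elt R n) : emul h (@eone R n) a = a.
Proof. by rewrite emul_efunl; apply: funext => M; apply: funext => x; rewrite mul1r. Qed.

Lemma emul1r n (a : Elt R n) : emul h a (@eone R n) = a.
Proof. by rewrite emul_efunr; apply: funext => M; apply: funext => x; rewrite mulr1. Qed.

End Terms.

Section LowTensorPowers.
Variable R : realType.
Local Notation C := R[i].

Definition mon1 (a : bool * bool) : mon 1 := [ffun _ => a].
Definition mon2 (a b : bool * bool) : mon 2 := [ffun k => if k == i0 then a else b].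
Definition mon3 (a b c : bool * bool) : mon 3 :=
  [ffun k => if k == j0 then a else if k == j1 then b else c].

Lemma ord2P (k : 'I_2) : k = i0 \/ k = i1.
Proof. by case: k => [[|[|//]]] k2; [left|right]; apply: val_inj. Qed.

Lemma ord3P (k : 'I_3) : [\/ k = j0, k = j1 | k = j2].
Proof.
case: k => [[|[|[|//]]]] k3; [apply: Or31|apply: Or32|apply: Or33]; apply: val_inj => //=.
by rewrite /j1 inordK.
Qed.

Lemma j1_neq0 : (j1 == j0) = false. Proof. by rewrite -val_eqE /= inordK. Qed.
Lemma j2_neq1 : (j2 == j1) = false. Proof. by rewrite -val_eqE /= inordK. Qed.
Lemma j1_neq2 : (j1 == j2) = false. Proof. by rewrite eq_sym j2_neq1. Qed.

Lemma mon1E a k : mon1 a k = a. Proof. by rewrite ffunE. Qed.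
Lemma mon2E0 a b : mon2 a b i0 = a. Proof. by rewrite ffunE. Qed.
Lemma mon2E1 a b : mon2 a b i1 = b. Proof. by rewrite ffunE. Qed.
Lemma mon3E0 a b c : mon3 a b c j0 = a. Proof. by rewrite ffunE. Qed.
Lemma mon3E1 a b c : mon3 a b c j1 = b. Proof. by rewrite ffunE j1_neq0 eqxx. Qed.
Lemma mon3E2 a b c : mon3 a b c j2 = c. Proof. by rewrite ffunE j2_neq1. Qed.

Lemma mon1_eta (M : mon 1) : M = mon1 (M ord0).
Proof. by apply/ffunP => k; rewrite ord1 mon1E. Qed.

Lemma eq_mon1 (M : mon 1) a : (M == mon1 a) = (M ord0 == a).
Proof. by rewrite {1}(mon1_eta M); apply/eqP/eqP => [/ffunP/(_ ord0)|->]; rewrite ?mon1E. Qed.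

Lemma eq_mon2 (M : mon 2) a b : (M == mon2 a b) = (M i0 == a) && (M i1 == b).
Proof.
apply/eqP/andP => [->|[/eqP M0 /eqP M1]]; first by rewrite mon2E0 mon2E1.
by apply/ffunP => k; case: (ord2P k) => ->; rewrite ?mon2E0 ?mon2E1.
Qed.

Lemma eq_mon3 (M : mon 3) a b c :
  (M == mon3 a b c) = [&& M j0 == a, M j1 == b & M j2 == c].
Proof.
apply/eqP/and3P => [->|[/eqP M0 /eqP M1 /eqP M2]]; first by rewrite mon3E0 mon3E1 mon3E2.
by apply/ffunP => k; case: (ord3P k) => ->; rewrite ?mon3E0 ?mon3E1 ?mon3E2.
Qed.

Lemma mon0_2 : mon0 2 = mon2 m1 m1.
Proof. by apply/ffunP => k; rewrite !ffunE; case: ifP. Qed.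

Lemma mon0_3 : mon0 3 = mon3 m1 m1 m1.
Proof. by apply/ffunP => k; rewrite !ffunE; case: ifP => //; case: ifP. Qed.

Lemma monk_i0 m : monk i0 m = mon2 m m1.
Proof. by apply/ffunP => k; rewrite !ffunE. Qed.

Lemma monk_i1 m : monk i1 m = mon2 m1 m.
Proof. by apply/ffunP => k; rewrite !ffunE; case: (ord2P k) => ->. Qed.

Lemma monk_j0 m : monk j0 m = mon3 m m1 m1.
Proof. by apply/ffunP => k; rewrite !ffunE; case: ifP => //; case: ifP. Qed.

Lemma monk_j2 m : monk j2 m = mon3 m1 m1 m.
Proof.
apply/ffunP => k; rewrite !ffunE.
by case: (ord3P k) => ->; rewrite ?eqxx /= ?j1_neq0 ?j1_neq2 ?j2_neq1.
Qed.

Lemma prod_ord2 (F : 'I_2 -> C) : \prod_(k < 2) F k = F i0 * F i1.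
Proof. by rewrite big_ord_recl big_ord1; congr (_ * F _); apply: val_inj. Qed.

Lemma prod_ord3 (F : 'I_3 -> C) : \prod_(k < 3) F k = F j0 * F j1 * F j2.
Proof.
rewrite big_ord_recl big_ord_recl big_ord1 mulrA.
by congr (_ * F _ * F _); apply: val_inj => //=; rewrite inordK.
Qed.

Lemma sum_legmon (G : bool * bool -> C) :
  \sum_(a : bool * bool) G a = G mXpXm + G mXp + (G mXm + G m1).
Proof.
rewrite (eq_bigr (fun p => G (p.1, p.2))); last by case.
by rewrite -(pair_big xpredT xpredT (fun a b => G (a, b))) /= !big_bool /= addrA.
Qed.

Lemma sum_mon2 (F : mon 2 -> C) :
  \sum_(M : mon 2) F M = \sum_(a : bool * bool) \sum_(b : bool * bool) F (mon2 a b).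
Proof.
rewrite pair_big /= (reindex (fun p : (bool * bool) * (bool * bool) => mon2 p.1 p.2)) //=.
exists (fun M : mon 2 => (M i0, M i1)) => [[a b] _|M _] /=; first by rewrite mon2E0 mon2E1.
by apply/eqP; rewrite eq_sym eq_mon2 !eqxx.
Qed.

End LowTensorPowers.

Section Embeddings.
Variables (R : realType) (h : R[i]).
Local Notation C := R[i].

Lemma emb_eadd n m (j : 'I_n -> 'I_m) (a b : Elt R n) :
  emb j (eadd a b) = eadd (emb j a) (emb j b).
Proof. by apply: funext => M; apply: funext => x; rewrite /emb /eadd; case: ifP; rewrite ?addr0. Qed.

Lemma emb_eterm n m (j : 'I_n -> 'I_m) (phi : ('I_n -> C * C) -> C)
  (P : mon n) (Q : mon m) :
  (forall k, Q (j k) = P k) -> (forall l, l \notin codom j -> Q l = m1) ->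
  emb j (eterm phi P) = eterm (fun x => phi (fun k => x (j k))) Q.
Proof.
move=> QjP Q1; apply: funext => M; apply: funext => x; rewrite /emb /eterm.
case: (eqVneq M Q) => [->|neMQ].
  have -> : [forall l, (l \notin codom j) ==> (Q l == m1)].
    by apply/forallP => l; apply/implyP => /Q1 ->.
  by have /eqP -> : [ffun k => Q (j k)] = P by apply/ffunP => k; rewrite ffunE QjP.
case: ifP => // /forallP M1; case: eqP => // MjP; case/eqP: neMQ.
apply/ffunP => l; case: (boolP (l \in codom j)) => [/codomP [k ->]|jl].
  by rewrite QjP -MjP ffunE.
by have := M1 l; rewrite jl => /eqP ->; rewrite Q1.
Qed.

Ltac legs :=
  [> let k := fresh "k" in move=> k; case: (ord2P k) => -> /=;
     rewrite ?mon2E0 ?mon2E1 ?mon3E0 ?mon3E1 ?mon3E2 //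
  |  let l := fresh "l" in move=> l; case: (ord3P l) => -> /=;
     rewrite ?mon3E0 ?mon3E1 ?mon3E2 //;
     case/negP; apply/codomP; solve [exists i0; done | exists i1; done]].

Lemma emb_leg01_eterm (phi : ('I_2 -> C * C) -> C) a b :
  emb leg01 (eterm phi (mon2 a b)) = eterm (fun x => phi (fun k => x (leg01 k))) (mon3 a b m1).
Proof. by apply: emb_eterm; legs. Qed.

Lemma emb_leg12_eterm (phi : ('I_2 -> C * C) -> C) a b :
  emb leg12 (eterm phi (mon2 a b)) = eterm (fun x => phi (fun k => x (leg12 k))) (mon3 m1 a b).
Proof. by apply: emb_eterm; legs. Qed.

Lemma emb_leg02_eterm (phi : ('I_2 -> C * C) -> C) a b :
  emb leg02 (eterm phi (mon2 a b)) = eterm (fun x => phi (fun k => x (leg02 k))) (mon3 a m1 b).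
Proof. by apply: emb_eterm; legs. Qed.

Lemma subst_eadd n m L (xp xm : 'I_n -> Elt R m) (a b : Elt R n) :
  subst h L xp xm (eadd a b) = eadd (subst h L xp xm a) (subst h L xp xm b).
Proof.
apply: funext => M''; apply: funext => y; rewrite /subst /eadd -big_split.
by apply: eq_bigr => M _; rewrite !emul_efunl mulrDl.
Qed.

Lemma subst_eterm n m L (xp xm : 'I_n -> Elt R m) (phi : ('I_n -> C * C) -> C) (P : mon n) :
  subst h L xp xm (eterm phi P) = emul h (efun (fun y => phi (L y))) (monimg h xp xm P).
Proof.
apply: funext => M''; apply: funext => y; rewrite /subst.
under eq_bigr do rewrite emul_efunl.
rewrite emul_efunl (bigD1 P) //= big1 ?addr0; first by rewrite /eterm eqxx.
by move=> M /negbTE neMP; rewrite /eterm neMP mul0r.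
Qed.

Lemma monimg_1 m (xp xm : 'I_1 -> Elt R m) P : monimg h xp xm P =
  emul h (if (P ord0).1 then xp ord0 else @eone R m) (if (P ord0).2 then xm ord0 else @eone R m).
Proof.
rewrite /monimg; have -> : enum 'I_1 = [:: ord0] by apply: (inj_map val_inj); rewrite val_enum_ord.
by rewrite /= emul1r.
Qed.

Lemma monimg_2 m (xp xm : 'I_2 -> Elt R m) P : monimg h xp xm P =
  emul h (emul h (if (P i0).1 then xp i0 else @eone R m) (if (P i0).2 then xm i0 else @eone R m))
         (emul h (if (P i1).1 then xp i1 else @eone R m) (if (P i1).2 then xm i1 else @eone R m)).
Proof.
rewrite /monimg; have -> : enum 'I_2 = [:: i0; i1] by apply: (inj_map val_inj); rewrite val_enum_ord.
by rewrite /= emul1r.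
Qed.

End Embeddings.

Ltac simpl_weights := rewrite ?shift_m1 ?shift_mXpXm
  ?Rcartan_shiftXp_l ?Rcartan_shiftXm_l ?Rcartan_shiftXp_r ?Rcartan_shiftXm_r
  ?K1f_shiftXp ?K1f_shiftXm ?K2f_shiftXp ?K2f_shiftXm.

Ltac field_weights := field; rewrite ?Rcartan_neq0 ?K1f_neq0 ?K2f_neq0 ?q_neq0 //.

Section RMatrix.
Variables (R : realType) (h : R[i]).
Local Notation C := R[i].
Local Notation q := (q h).

Lemma DXp_eterm : DXp h =
  eadd (eterm (fun x => K1f h (x i1)) (mon2 mXp m1))
       (eterm (fun x => (K2f h (x i0))^-1) (mon2 m1 mXp)).
Proof.
rewrite /DXp !Xp_eterm emul_eterm_efun emul_efun_eterm monk_i0 monk_i1.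
by congr eadd; apply: eq_eterm => x; rewrite ?mulr1 // /mshift ffunE /= shift_m1 mul1r.
Qed.

Lemma DXm_eterm : DXm h =
  eadd (eterm (fun x => K2f h (x i1)) (mon2 mXm m1))
       (eterm (fun x => (K1f h (x i0))^-1) (mon2 m1 mXm)).
Proof.
rewrite /DXm !Xm_eterm emul_eterm_efun emul_efun_eterm monk_i0 monk_i1.
by congr eadd; apply: eq_eterm => x; rewrite ?mulr1 // /mshift ffunE /= shift_m1 mul1r.
Qed.

Definition monXpXm : mon 2 := mon2 mXp mXm.

Definition RcoefXpXm (u v : C * C) : C :=
  Rcartan h u v * ((1 - q ^+ 2) * (K2f h u / K2f h v)).

Lemma Rmat_eterm : Rmat h =
  eadd (efun (fun y => Rcartan h (y i0) (y i1)))
       (eterm (fun y => RcoefXpXm (y i0) (y i1)) monXpXm).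
Proof.
rewrite /Rmat emul_efunl /K2 /K2i Xp_eterm Xm_eterm !emul_efun_eterm emul_eterm.
apply: funext => M; apply: funext => x.
rewrite /eadd /escale /eone /efun /eterm prod_ord2 /mshift monk_i0 monk_i1 /monXpXm mon0_2.
rewrite !eq_mon2 !mon2E0 !mon2E1 /= shift_m1 /RcoefXpXm /Rcartan.
by case: (M i0) => [[] []]; case: (M i1) => [[] []] /=; ring.
Qed.

(* R^-1 = (1 - (1 - q^2) E (x) F) A^-1 with A the Cartan part of R; moving A^-1 to the left of
   X^+ (x) X^- turns K2 (x) K2^-1 into K1^-1 (x) K1 and cancels the sign. *)
Definition RinvcoefXpXm (u v : C * C) : C :=
  (1 - q ^+ 2) * K1f h v / K1f h u / Rcartan h u v.

Definition Rinv : Elt R 2 :=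
  eadd (efun (fun y => (Rcartan h (y i0) (y i1))^-1))
       (eterm (fun y => RinvcoefXpXm (y i0) (y i1)) monXpXm).

Lemma Rmat_mulRinv : emul h (Rmat h) Rinv = @eone R 2.
Proof.
rewrite Rmat_eterm /Rinv !efun_eterm !(emulDl, emulDr) !emul_efun_eterm !emul_eterm_efun.
rewrite emul_eterm eone_eterm; apply: funext => M; apply: funext => x.
rewrite /eadd /eterm prod_ord2 /mshift /monXpXm mon0_2 !eq_mon2 !mon2E0 !mon2E1.
case: (M i0) => [[] []]; case: (M i1) => [[] []] /=;
  rewrite /RcoefXpXm /RinvcoefXpXm; simpl_weights; field_weights.
Qed.

Lemma Rinv_mulRmat : emul h Rinv (Rmat h) = @eone R 2.
Proof.
rewrite Rmat_eterm /Rinv !efun_eterm !(emulDl, emulDr) !emul_efun_eterm !emul_eterm_efun.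
rewrite emul_eterm eone_eterm; apply: funext => M; apply: funext => x.
rewrite /eadd /eterm prod_ord2 /mshift /monXpXm mon0_2 !eq_mon2 !mon2E0 !mon2E1.
case: (M i0) => [[] []]; case: (M i1) => [[] []] /=;
  rewrite /RcoefXpXm /RinvcoefXpXm; simpl_weights; field_weights.
Qed.

End RMatrix.

Section Coassociativity.
Variables (R : realType) (h : R[i]).

Lemma R12_eterm : R12 (Rmat h) =
  eadd (efun (fun y => Rcartan h (y j0) (y j1)))
       (eterm (fun y => RcoefXpXm h (y j0) (y j1)) (mon3 mXp mXm m1)).
Proof. by rewrite /R12 Rmat_eterm efun_eterm emb_eadd mon0_2 !emb_leg01_eterm -mon0_3. Qed.

Lemma R13_eterm : R13 (Rmat h) =
  eadd (efun (fun y => Rcartan h (y j0) (y j2)))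
       (eterm (fun y => RcoefXpXm h (y j0) (y j2)) (mon3 mXp m1 mXm)).
Proof. by rewrite /R13 Rmat_eterm efun_eterm emb_eadd mon0_2 !emb_leg02_eterm -mon0_3. Qed.

Lemma R23_eterm : R23 (Rmat h) =
  eadd (efun (fun y => Rcartan h (y j1) (y j2)))
       (eterm (fun y => RcoefXpXm h (y j1) (y j2)) (mon3 m1 mXp mXm)).
Proof. by rewrite /R23 Rmat_eterm efun_eterm emb_eadd mon0_2 !emb_leg12_eterm -mon0_3. Qed.

Lemma emb_leg01_DXp : emb leg01 (DXp h) =
  eadd (eterm (fun x => K1f h (x j1)) (mon3 mXp m1 m1))
       (eterm (fun x => (K2f h (x j0))^-1) (mon3 m1 mXp m1)).
Proof. by rewrite DXp_eterm emb_eadd !emb_leg01_eterm. Qed.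

Lemma emb_leg12_DXm : emb leg12 (DXm h) =
  eadd (eterm (fun x => K2f h (x j2)) (mon3 m1 mXm m1))
       (eterm (fun x => (K1f h (x j1))^-1) (mon3 m1 m1 mXm)).
Proof. by rewrite DXm_eterm emb_eadd !emb_leg12_eterm. Qed.

Ltac expand3 :=
  rewrite !(emulDl, emulDr) !emul_eterm !emul_efunl ?emul_efunr;
  let M := fresh "M" in let x := fresh "x" in
  apply: funext => M; apply: funext => x;
  rewrite /eadd /eterm /efun !prod_ord3 /mshift mon0_3 !eq_mon3 !mon3E0 !mon3E1 !mon3E2 /=;
  case: (M j0) => [[] []]; case: (M j1) => [[] []]; case: (M j2) => [[] []] /=;
  rewrite ?mul0r ?mulr0 ?add0r ?addr0 //= /RcoefXpXm; simpl_weights;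
  rewrite ?Rcartan_addwl ?Rcartan_addwr ?K2f_addw; field_weights.

Lemma DeltaId_Rmat : DeltaId h (Rmat h) = emul h (R13 (Rmat h)) (R23 (Rmat h)).
Proof.
rewrite R13_eterm R23_eterm /DeltaId Rmat_eterm efun_eterm subst_eadd !subst_eterm.
rewrite !monimg_2 /monXpXm !ffunE /= !emul1r !emul1l emb_leg01_DXp Xm_eterm monk_j2.
expand3.
Qed.

Lemma IdDelta_Rmat : IdDelta h (Rmat h) = emul h (R13 (Rmat h)) (R12 (Rmat h)).
Proof.
rewrite R13_eterm R12_eterm /IdDelta Rmat_eterm efun_eterm subst_eadd !subst_eterm.
rewrite !monimg_2 /monXpXm !ffunE /= !emul1r !emul1l emb_leg12_DXm Xp_eterm monk_j0.
expand3.
Qed.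

End Coassociativity.

Section QuasiCocommutativity.
Variables (R : realType) (h : R[i]).
Hypothesis hq : q h - (q h)^-1 != 0.

Lemma q2_sub1_neq0 : q h * q h - 1 != 0.
Proof. by rewrite -[1](mulfV (q_neq0 h)) -mulrBr mulf_neq0 ?q_neq0. Qed.

Lemma DXp_mul_DXm : emul h (DXp h) (DXm h) =
  eadd (eadd (eterm (fun x => K1f h (x i1) * K2f h (x i1)) (mon2 mXpXm m1))
             (eterm (fun x => K1f h (x i1) / K1f h (shift mXp (x i0))) (mon2 mXp mXm)))
       (eadd (eterm (fun x => (K2f h (x i0))^-1 * K2f h (shift mXp (x i1))) (mon2 mXm mXp))
             (eterm (fun x => (K2f h (x i0))^-1 / K1f h (x i0)) (mon2 m1 mXpXm))).
Proof.
rewrite DXp_eterm DXm_eterm !(emulDl, emulDr) !emul_eterm.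
apply: funext => M; apply: funext => x.
rewrite /eadd /eterm /mshift !prod_ord2 !eq_mon2 !ffunE /=.
by case: (M i0) => [[] []]; case: (M i1) => [[] []] /=; rewrite ?shift_m1; ring.
Qed.

Lemma tau_Delta_eterm phi (P : mon 1) :
  tau (Delta h (eterm phi P)) = emul h (emul h (Rmat h) (Delta h (eterm phi P))) (Rinv h).
Proof.
rewrite (mon1_eta P); case: (P ord0) => [[] []];
  rewrite /Delta subst_eterm monimg_1 mon1E /= ?emul1r ?DXp_mul_DXm ?DXp_eterm ?DXm_eterm;
  rewrite Rmat_eterm /Rinv !(emulDl, emulDr) ?emul_efun_eterm ?emul_eterm_efun ?emul_eterm;
  rewrite ?emul_efunl ?emul_efunr ?emul_etermr;
  apply: funext => M; apply: funext => x;
  rewrite /eadd /tau ?sum_mon2 ?sum_legmon /eterm /efun /mshift ?prod_ord2 ?mon0_2;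
  rewrite !eq_mon2 !ffunE /=;
  rewrite ?mul0r ?mulr0 ?add0r ?addr0 ?mul1r ?mulr1;
  case: (M i0) => [[] []]; case: (M i1) => [[] []] /=;
  rewrite ?mul0r ?mulr0 ?add0r ?addr0 ?mul1r ?mulr1 // /Cf /RcoefXpXm /RinvcoefXpXm;
  simpl_weights; rewrite ?addw_shift ?[addw (_ i1) (_ i0)]addwC; field_weights;
  rewrite ?hq ?q2_sub1_neq0 //.
Qed.

Lemma elt1_eterm_decomp (a : Elt R 1) : a =
  eadd (eadd (eterm (a (mon1 mXpXm)) (mon1 mXpXm)) (eterm (a (mon1 mXp)) (mon1 mXp)))
       (eadd (eterm (a (mon1 mXm)) (mon1 mXm)) (eterm (a (mon1 m1)) (mon1 m1))).
Proof.
apply: funext => M; apply: funext => x; rewrite /eadd /eterm !eq_mon1 {1}(mon1_eta M).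
by case: (M ord0) => [[] []] /=; rewrite ?add0r ?addr0.
Qed.

Lemma tau_Delta (a : Elt R 1) :
  tau (Delta h a) = emul h (emul h (Rmat h) (Delta h a)) (Rinv h).
Proof.
have Delta_eadd b c : Delta h (eadd b c) = eadd (Delta h b) (Delta h c) by exact: subst_eadd.
have tau_eadd b c : tau (eadd b c) = eadd (tau b) (tau c) by [].
have conj_eadd b c : emul h (emul h (Rmat h) (eadd b c)) (Rinv h) =
    eadd (emul h (emul h (Rmat h) b) (Rinv h)) (emul h (emul h (Rmat h) c) (Rinv h)).
  by rewrite emulDr emulDl.
by rewrite (elt1_eterm_decomp a) !Delta_eadd !tau_eadd !conj_eadd !tau_Delta_eterm.
Qed.

End QuasiCocommutativity.

Theorem mainTheorem1 (R : realType) (h : R[i])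
  (hq : q h - (q h)^-1 != 0) :
  (exists Rinv : Elt R 2,
     emul h (Rmat h) Rinv = @eone R 2 /\ emul h Rinv (Rmat h) = @eone R 2 /\
     (forall a : Elt R 1, inU h a ->
        tau (Delta h a) = emul h (emul h (Rmat h) (Delta h a)) Rinv)) /\
  DeltaId h (Rmat h) = emul h (R13 (Rmat h)) (R23 (Rmat h)) /\
  IdDelta h (Rmat h) = emul h (R13 (Rmat h)) (R12 (Rmat h)).
Proof.
split; last by split; [exact: DeltaId_Rmat | exact: IdDelta_Rmat].
exists (Rinv h); split; first exact: Rmat_mulRinv.
split; first exact: Rinv_mulRmat.
by move=> a _; exact: tau_Delta.
Qed.
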